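(* Assume $n_1,n_2\in(0,4)$ and (IE). Then for all $\varepsilon\in(0,1)$ and any $t\in(0,T_{max,\varepsilon})$, $$\frac12\frac{d}{dt}\int_\Omega u_{\varepsilon x}^2+\varepsilon\int_\Omega\frac{u_\varepsilon^4}{u_\varepsilon^{4-n_1}+\varepsilon}u_{\varepsilon xxx}^2+\frac{D_1}{2}\int_\Omega u_{\varepsilon xx}^2\le\chi_1\int_\Omega\Big(\frac{u_\varepsilon^{5-n_1}}{u_\varepsilon^{4-n_1}+\varepsilon}v_{\varepsilon x}\Big)_xu_{\varepsilon xx}+3\lambda_1\int_\Omega u_{\varepsilon x}^2+\frac{a_1^2}{2D_1}\int_\Omega u_\varepsilon^2v_\varepsilon^2$$ and $$\frac12\frac{d}{dt}\int_\Omega v_{\varepsilon x}^2+\varepsilon\int_\Omega\frac{v_\varepsilon^4}{v_\varepsilon^{4-n_2}+\varepsilon}v_{\varepsilon xxx}^2+\frac{D_2}{2}\int_\Omega v_{\varepsilon xx}^2\le-\chi_2\int_\Omega\Big(\frac{v_\varepsilon^{5-n_2}}{v_\varepsilon^{4-n_2}+\varepsilon}u_{\varepsilon x}\Big)_xv_{\varepsilon xx}+3\lambda_2\int_\Omega v_{\varepsilon x}^2+\frac{a_2^2}{2D_2}\int_\Omega u_\varepsilon^2v_\varepsilon^2.$$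
   Context: Let $\Omega\subset\mathbb{R}$ be a bounded open interval, $D_i,a_i,\lambda_i,\chi_i>0$ ($i=1,2$), and fix $\alpha\in(0,\frac12]$. Assumption (IE): $u_0,v_0\in W^{1,2}(\Omega)$ with $u_0>0,v_0>0$ in $\overline\Omega$; for each $\varepsilon\in(0,1)$, $u_{0\varepsilon},v_{0\varepsilon}\in C^5(\overline\Omega)$ with $u_{0\varepsilon x}=u_{0\varepsilon xxx}=v_{0\varepsilon x}=v_{0\varepsilon xxx}=0$ on $\partial\Omega$; $\frac12\inf_\Omega u_0\le u_{0\varepsilon}\le u_0+1$, $\frac12\inf_\Omega v_0\le v_{0\varepsilon}\le v_0+1$ in $\Omega$; $\int_\Omega u_{0\varepsilon x}^2\le\int_\Omega u_{0x}^2+1$, $\int_\Omega v_{0\varepsilon x}^2\le\int_\Omega v_{0x}^2+1$; $u_{0\varepsilon}\to u_0$, $v_{0\varepsilon}\to v_0$ a.e. as $\varepsilon\searrow0$. Approximating problem: $u_t=-\varepsilon\big(\frac{u^4}{u^{4-n_1}+\varepsilon}u_{xxx}\big)_x+\varepsilon^{\alpha/2}(u^{-\alpha}u_x)_x+D_1u_{xx}-\chi_1\big(\frac{u^{5-n_1}}{u^{4-n_1}+\varepsilon}v_x\big)_x+\frac{3u^3}{3u^2+\varepsilon}(\lambda_1-u+a_1v)$, $v_t=-\varepsilon\big(\frac{v^4}{v^{4-n_2}+\varepsilon}v_{xxx}\big)_x+\varepsilon^{\alpha/2}(v^{-\alpha}v_x)_x+D_2v_{xx}+\chi_2\big(\frac{v^{5-n_2}}{v^{4-n_2}+\varepsilon}u_x\big)_x+\frac{3v^3}{3v^2+\varepsilon}(\lambda_2-v-a_2u)$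 in $\Omega\times(0,\infty)$, $u_x=v_x=u_{xxx}=v_{xxx}=0$ on $\partial\Omega$, $u(\cdot,0)=u_{0\varepsilon}$, $v(\cdot,0)=v_{0\varepsilon}$. For $n_i\in(0,4)$ and each $\varepsilon$ it has a classical solution $(u_\varepsilon,v_\varepsilon)$, positive in $\overline\Omega\times[0,T_{max,\varepsilon})$, belonging to $\bigcap_{s\in(3/2,2)}C^0([0,T_{max,\varepsilon});W^{s,2}(\Omega))\cap C^{4,1}(\overline\Omega\times(0,T_{max,\varepsilon}))$, where $T_{max,\varepsilon}\in(0,\infty]$ is maximal: either $T_{max,\varepsilon}=\infty$ or $\limsup_{t\nearrow T_{max,\varepsilon}}\{\|u_\varepsilon(\cdot,t)\|_{W^{2,2}}+\|1/u_\varepsilon(\cdot,t)\|_{L^\infty}+\|v_\varepsilon(\cdot,t)\|_{W^{2,2}}+\|1/v_\varepsilon(\cdot,t)\|_{L^\infty}\}=\infty$. *)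

From Stdlib Require Import Reals.
From Coquelicot Require Import Coquelicot.
Open Scope R_scope.

Definition in_cyl (a b : R) (T : Rbar) (x t : R) : Prop :=
  a <= x <= b /\ 0 < t /\ Rbar_lt t T.
Definition in_open_cyl (a b : R) (T : Rbar) (x t : R) : Prop :=
  a < x < b /\ 0 < t /\ Rbar_lt t T.

Definition cont_cyl (a b : R) (T : Rbar) (f : R -> R -> R) : Prop :=
  forall x t, in_cyl a b T x t ->
  forall e, 0 < e -> exists d, 0 < d /\
    forall y s, in_cyl a b T y s -> Rabs (y - x) < d -> Rabs (s - t) < d ->
      Rabs (f y s - f x t) < e.

(* u belongs to C^{4,1}( [a,b] x (0,T) ) with the partial derivatives
   u1 = u_x, u2 = u_xx, u3 = u_xxx, u4 = u_xxxx, ut = u_t : the derivatives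
   exist classically in the interior and u, u1, ..., u4, ut are jointly
   continuous up to the spatial boundary (u1..u4, ut at x = a, b are the
   continuous extensions). *)
Definition C41 (a b : R) (T : Rbar) (u u1 u2 u3 u4 ut : R -> R -> R) : Prop :=
  (forall x t, in_open_cyl a b T x t ->
     is_derive (fun y => u y t) x (u1 x t) /\
     is_derive (fun y => u1 y t) x (u2 x t) /\
     is_derive (fun y => u2 y t) x (u3 x t) /\
     is_derive (fun y => u3 y t) x (u4 x t) /\
     is_derive (fun s => u x s) t (ut x t)) /\
  cont_cyl a b T u /\ cont_cyl a b T u1 /\ cont_cyl a b T u2 /\
  cont_cyl a b T u3 /\ cont_cyl a b T u4 /\ cont_cyl a b T ut.

Definition mob (eps n w : R) : R := w ^ 4 / (Rpower w (4 - n) + eps).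
Definition tax (eps n w : R) : R := Rpower w (5 - n) / (Rpower w (4 - n) + eps).

(* Test the equation for [w] (u or v) with [-w_xx] and integrate by parts; the boundary
   terms vanish since [w_x = w_xxx = 0].  This produces [1/2 d/dt int w_x^2],
   [-eps int mob(w) w_xxx^2] and [-D int w_xx^2].  Adding the vanishing integral
   [(2-a)/9 int (w^(-a-1) w_x^3)_x] to the contribution [-eps^(a/2) int (w^-a w_x)_x w_xx]
   of the degenerate diffusion makes it minus the integral of a sum of squares, as
   [a <= 1/2].  For the kinetic term, with [g(w) = 3 w^3 / (3 w^2 + eps)], the part
   [g(w) (w - lam) w_xx] integrates by parts to [-int (g(w) (w - lam))' w_x^2], where
   [(g(w) (w - lam))' >= -3 lam]; the cross term [g(w) beta z w_xx] is absorbed by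
   Young's inequality since [g(w) <= w]. *)

From Stdlib Require Import Reals Lra Psatz.
From Coquelicot Require Import Coquelicot.
Open Scope R_scope.

Definition clamp (a b x : R) : R := Rmax a (Rmin b x).

Definition cont_Icc (a b : R) (g : R -> R) : Prop :=
  forall x, continuous (fun y => g (clamp a b y)) x.

Lemma clamp_in a b x : a <= b -> a <= clamp a b x <= b.
Proof. intros; unfold clamp, Rmax, Rmin; repeat destruct Rle_dec; lra. Qed.

Lemma clamp_id a b x : a <= x <= b -> clamp a b x = x.
Proof. intros; unfold clamp, Rmax, Rmin; repeat destruct Rle_dec; lra. Qed.

Lemma Rabs_clamp_sub_le a b x y : a <= b ->
  Rabs (clamp a b y - clamp a b x) <= Rabs (y - x).
Proof.
  intros; unfold clamp, Rmax, Rmin; repeat destruct Rle_dec;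
  unfold Rabs; repeat destruct Rcase_abs; lra.
Qed.

Section ContIcc.
Variables a b : R.
Hypothesis Hab : a <= b.

Lemma cont_Icc_const c : cont_Icc a b (fun _ => c).
Proof. intros x; apply continuous_const. Qed.

Lemma cont_Icc_plus f g :
  cont_Icc a b f -> cont_Icc a b g -> cont_Icc a b (fun x => f x + g x).
Proof.
  intros Hf Hg x.
  apply (continuous_plus (fun y => f (clamp a b y)) (fun y => g (clamp a b y))); auto.
Qed.

Lemma cont_Icc_mult f g :
  cont_Icc a b f -> cont_Icc a b g -> cont_Icc a b (fun x => f x * g x).
Proof.
  intros Hf Hg x.
  apply (continuous_mult (fun y => f (clamp a b y)) (fun y => g (clamp a b y))); auto.
Qed.

Lemma cont_Icc_opp f : cont_Icc a b f -> cont_Icc a b (fun x => - f x).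
Proof. intros Hf x; apply (continuous_opp (fun y => f (clamp a b y))); auto. Qed.

Lemma cont_Icc_minus f g :
  cont_Icc a b f -> cont_Icc a b g -> cont_Icc a b (fun x => f x - g x).
Proof. intros; apply cont_Icc_plus, cont_Icc_opp; auto. Qed.

Lemma cont_Icc_pow f n : cont_Icc a b f -> cont_Icc a b (fun x => f x ^ n).
Proof.
  intros Hf; induction n as [|n IH]; simpl; [apply cont_Icc_const | apply cont_Icc_mult; auto].
Qed.

Lemma cont_Icc_comp_pos (phi : R -> R) f :
  (forall y, 0 < y -> continuous phi y) -> (forall x, a <= x <= b -> 0 < f x) ->
  cont_Icc a b f -> cont_Icc a b (fun x => phi (f x)).
Proof.
  intros Hphi Hpos Hf x.
  apply (continuous_comp (fun y => f (clamp a b y)) phi); auto.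
  apply Hphi, Hpos, clamp_in, Hab.
Qed.

Lemma ex_RInt_cont_Icc f : cont_Icc a b f -> ex_RInt f a b.
Proof.
  intros Hf; apply ex_RInt_ext with (fun y => f (clamp a b y)).
  - intros x Hx; rewrite Rmin_left, Rmax_right in Hx by auto; rewrite clamp_id; lra.
  - apply (@ex_RInt_continuous R_CompleteNormedModule); intros; apply Hf.
Qed.

Lemma is_RInt_cont_Icc f : cont_Icc a b f -> is_RInt f a b (RInt f a b).
Proof. intros; apply (@RInt_correct R_CompleteNormedModule), ex_RInt_cont_Icc; auto. Qed.

Lemma cont_Icc_bounded f :
  cont_Icc a b f -> exists M, forall x, a <= x <= b -> Rabs (f x) <= M.
Proof.
  intros Hf.
  destruct (continuity_ab_maj (fun x => Rabs (f (clamp a b x))) a b Hab) as [m [Hm _]].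
  - intros c _; apply continuity_pt_filterlim.
    apply (continuous_comp (fun y => f (clamp a b y)) Rabs); auto; apply continuous_Rabs.
  - exists (Rabs (f (clamp a b m))); intros x Hx.
    specialize (Hm x Hx); simpl in Hm; rewrite clamp_id in Hm; auto.
Qed.

End ContIcc.

Ltac cont_Icc_step :=
  match goal with
  | |- cont_Icc _ _ (fun x => _ * _) => apply cont_Icc_mult
  | |- cont_Icc _ _ (fun x => _ + _) => apply cont_Icc_plus
  | |- cont_Icc _ _ (fun x => _ - _) => apply cont_Icc_minus
  | |- cont_Icc _ _ (fun x => - _) => apply cont_Icc_opp
  | |- cont_Icc _ _ (fun x => _ ^ _) => apply cont_Icc_pow
  | |- cont_Icc _ _ (fun _ => _) => apply cont_Icc_const
  end.

(* [h] is differentiable only in the open interval, so [is_RInt_derive] does not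
   apply; instead the mean value theorem is applied to [F - h o clamp a b], with
   [F] an antiderivative of [f o clamp a b]. *)
Lemma is_RInt_derive_interior a b h f : a < b -> cont_Icc a b h -> cont_Icc a b f ->
  (forall x, a < x < b -> is_derive h x (f x)) -> is_RInt f a b (h b - h a).
Proof.
  intros Hab Hh Hf Hd.
  set (fc := fun y => f (clamp a b y)).
  assert (Ex : forall y z, ex_RInt fc y z).
  { intros y z; apply (@ex_RInt_continuous R_CompleteNormedModule); intros; apply Hf. }
  set (F := fun y => RInt fc a y).
  assert (DF : forall x, is_derive F x (fc x)).
  { intros x; apply is_derive_RInt with (a := a); [|apply Hf].
    apply filter_forall; intros y; apply (RInt_correct fc a y (Ex a y)). }
  destruct (MVT_gen (fun y => F y - h (clamp a b y)) a b (fun _ => 0)) as [c [_ Hc]].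
  - rewrite Rmin_left, Rmax_right by lra; intros x Hx.
    replace 0 with (fc x - f x) by (unfold fc; rewrite clamp_id; lra).
    apply (is_derive_minus F (fun y => h (clamp a b y))); [apply DF|].
    apply is_derive_ext_loc with h; [|apply Hd; lra].
    apply locally_interval with a b; simpl; try tauto.
    intros y Hy1 Hy2; rewrite clamp_id; lra.
  - intros x _; apply continuity_pt_filterlim.
    apply (continuous_minus F (fun y => h (clamp a b y))); [|apply Hh].
    apply (ex_derive_continuous (K := R_AbsRing) (V := R_NormedModule)); eexists; apply DF.
  - rewrite !clamp_id in Hc by lra; unfold F in Hc; rewrite RInt_point in Hc.
    apply is_RInt_ext with fc.
    + intros x Hx; rewrite Rmin_left, Rmax_right in Hx by lra.
      unfold fc; rewrite clamp_id; lra.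
    + replace (h b - h a) with (RInt fc a b) by (change zero with 0 in Hc; lra).
      apply (@RInt_correct R_CompleteNormedModule), Ex.
Qed.

Lemma is_RInt_derive_vanish a b h f : a < b -> cont_Icc a b h -> cont_Icc a b f ->
  (forall x, a < x < b -> is_derive h x (f x)) -> h a = 0 -> h b = 0 -> is_RInt f a b 0.
Proof.
  intros Hab Hh Hf Hd Ha Hb; replace 0 with (h b - h a) by lra.
  apply is_RInt_derive_interior; auto.
Qed.

Lemma RInt_Rplus a b f g : ex_RInt f a b -> ex_RInt g a b ->
  RInt (fun x => f x + g x) a b = RInt f a b + RInt g a b.
Proof. apply (RInt_plus (V := R_CompleteNormedModule)). Qed.

Lemma RInt_Rminus a b f g : ex_RInt f a b -> ex_RInt g a b ->
  RInt (fun x => f x - g x) a b = RInt f a b - RInt g a b.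
Proof. apply (RInt_minus (V := R_CompleteNormedModule)). Qed.

Lemma RInt_Rmult_l a b c f : ex_RInt f a b -> RInt (fun x => c * f x) a b = c * RInt f a b.
Proof. apply (RInt_scal (V := R_CompleteNormedModule)). Qed.

Lemma is_RInt_Rplus a b (f g : R -> R) If Ig : is_RInt f a b If -> is_RInt g a b Ig ->
  is_RInt (fun x => f x + g x) a b (If + Ig).
Proof. apply (is_RInt_plus (V := R_NormedModule)). Qed.

Lemma is_RInt_Rmult_l a b c (f : R -> R) If : is_RInt f a b If ->
  is_RInt (fun x => c * f x) a b (c * If).
Proof. apply (is_RInt_scal (V := R_NormedModule)). Qed.

Lemma Rabs_RInt_le_const a b f M : a <= b -> ex_RInt f a b ->
  (forall x, a < x < b -> Rabs (f x) <= M) -> Rabs (RInt f a b) <= (b - a) * M.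
Proof.
  intros Hab Hf HM.
  assert (Hc : forall c, RInt (fun _ => c) a b = (b - a) * c).
  { intros c; rewrite (RInt_const (V := R_CompleteNormedModule)); reflexivity. }
  apply Rabs_le; split.
  - replace (- ((b - a) * M)) with ((b - a) * - M) by ring; rewrite <- Hc.
    apply RInt_le; auto; [apply ex_RInt_const|].
    intros x Hx; specialize (HM x Hx); apply Rabs_le_between in HM; lra.
  - rewrite <- Hc; apply RInt_le; auto; [apply ex_RInt_const|].
    intros x Hx; specialize (HM x Hx); apply Rabs_le_between in HM; lra.
Qed.

Lemma is_derive_Rmult (f g : R -> R) x df dg : is_derive f x df -> is_derive g x dg ->
  is_derive (fun y => f y * g y) x (df * g x + f x * dg).
Proof. intros; apply (is_derive_mult f g x df dg); auto; intros; apply Rmult_comm. Qed.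

Lemma is_derive_comp_mult (phi w g : R -> R) dphi dw dg x :
  is_derive phi (w x) dphi -> is_derive w x dw -> is_derive g x dg ->
  is_derive (fun y => phi (w y) * g y) x (dphi * dw * g x + phi (w x) * dg).
Proof.
  intros Hphi Hw Hg.
  replace (dphi * dw * g x) with (dw * dphi * g x) by ring.
  apply (is_derive_Rmult (fun y => phi (w y)) g); auto.
  apply (is_derive_comp phi w); auto.
Qed.

Lemma is_RInt_by_parts_vanish a b (f df g dg : R -> R) : a < b ->
  cont_Icc a b f -> cont_Icc a b df -> cont_Icc a b g -> cont_Icc a b dg ->
  (forall x, a < x < b -> is_derive f x (df x)) ->
  (forall x, a < x < b -> is_derive g x (dg x)) ->
  f a * g a = 0 -> f b * g b = 0 ->
  is_RInt (fun x => df x * g x + f x * dg x) a b 0.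
Proof.
  intros Hab Cf Cdf Cg Cdg Hf Hg Ha Hb.
  apply (is_RInt_derive_vanish a b (fun x => f x * g x)); auto;
    repeat cont_Icc_step; auto.
  intros x Hx; apply is_derive_Rmult; auto.
Qed.

Lemma Rabs_sub_between t h r :
  Rmin t (t + h) <= r <= Rmax t (t + h) -> Rabs (r - t) <= Rabs h.
Proof. unfold Rmin, Rmax; destruct Rle_dec; unfold Rabs; repeat destruct Rcase_abs; lra. Qed.

Lemma Rabs_mult_sub_le p q p' q' M eta :
  Rabs (p - p') <= eta -> Rabs (q - q') <= eta -> Rabs p' <= M -> Rabs q' <= M -> eta <= 1 ->
  Rabs (p * q - p' * q') <= (2 * M + 1) * eta.
Proof.
  intros Hp Hq Hp' Hq' Heta.
  replace (p * q - p' * q') with ((p - p') * q + p' * (q - q')) by ring.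
  assert (Hq1 : Rabs q <= M + 1).
  { replace q with ((q - q') + q') by ring.
    eapply Rle_trans; [apply Rabs_triang | lra]. }
  eapply Rle_trans; [apply Rabs_triang|]; rewrite !Rabs_mult.
  assert (Rabs (p - p') * Rabs q <= eta * (M + 1))
    by (apply Rmult_le_compat; auto; apply Rabs_pos).
  assert (Rabs p' * Rabs (q - q') <= M * eta)
    by (apply Rmult_le_compat; auto; apply Rabs_pos).
  lra.
Qed.

Section Cylinder.
Variables (a b : R) (T : Rbar).
Hypothesis Hab : a < b.

Lemma time_nbhd t : 0 < t -> Rbar_lt t T ->
  exists d, 0 < d /\ forall s, Rabs (s - t) < d -> 0 < s /\ Rbar_lt s T.
Proof.
  intros Ht HT; destruct T as [T'| |]; simpl in HT; [| |contradiction].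
  - exists (Rmin (t / 2) ((T' - t) / 2)); split; [apply Rmin_glb_lt; lra|].
    intros s Hs; assert (H1 := Rmin_l (t / 2) ((T' - t) / 2));
      assert (H2 := Rmin_r (t / 2) ((T' - t) / 2)).
    unfold Rabs in Hs; destruct Rcase_abs in Hs; simpl; lra.
  - exists (t / 2); split; [lra|]; intros s Hs.
    unfold Rabs in Hs; destruct Rcase_abs in Hs; simpl; split; auto; lra.
Qed.

Lemma cont_cyl_clamp f x t : cont_cyl a b T f -> 0 < t -> Rbar_lt t T ->
  continuity_2d_pt (fun y s => f (clamp a b y) s) x t.
Proof.
  intros Hf Ht HT e.
  destruct (time_nbhd t Ht HT) as [d0 [Hd0 Hnear]].
  assert (Hx := clamp_in a b x (Rlt_le _ _ Hab)).
  destruct (Hf _ t (conj Hx (conj Ht HT)) e (cond_pos e)) as [d [Hd Hcont]].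
  exists (mkposreal _ (Rmin_pos _ _ Hd Hd0)); simpl; intros y s Hy Hs.
  assert (Hd_le := Rmin_l d d0); assert (Hd0_le := Rmin_r d d0).
  destruct (Hnear s) as [Hs0 HsT]; [lra|].
  apply Hcont; [split; [apply clamp_in; lra | auto] | | lra].
  eapply Rle_lt_trans; [apply Rabs_clamp_sub_le; lra | lra].
Qed.

Lemma cont_cyl_slice f t : cont_cyl a b T f -> 0 < t -> Rbar_lt t T ->
  cont_Icc a b (fun x => f x t).
Proof.
  intros Hf Ht HT x; apply continuity_pt_filterlim; intros e He.
  destruct (cont_cyl_clamp f x t Hf Ht HT (mkposreal e He)) as [d Hd].
  exists d; split; [apply cond_pos|]; intros y [_ Hy].
  apply (Hd y t Hy); rewrite Rminus_diag, Rabs_R0; apply cond_pos.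
Qed.

Lemma cont_cyl_unif_time f t : cont_cyl a b T f -> 0 < t -> Rbar_lt t T ->
  forall e, 0 < e -> exists d, 0 < d /\
    forall x s, a <= x <= b -> Rabs (s - t) < d -> Rabs (f x s - f x t) < e.
Proof.
  intros Hf Ht HT e He.
  destruct (uniform_continuity_2d_1d (fun y s => f (clamp a b y) s) a b t
    (fun x _ => cont_cyl_clamp f x t Hf Ht HT) (mkposreal e He)) as [d Hd].
  exists d; split; [apply cond_pos|]; intros x s Hx Hs.
  assert (H := Hd x t x s Hx); simpl in H; rewrite clamp_id in H by auto.
  apply Rabs_lt_between' in Hs; apply H; try lra.
  rewrite Rminus_diag, Rabs_R0; apply cond_pos.
Qed.

Section TimeDerivative.
Variables (w w1 w2 wt : R -> R -> R) (t : R).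
Hypotheses (Hdw : forall x s, in_open_cyl a b T x s -> is_derive (fun y => w y s) x (w1 x s))
  (Hdw1 : forall x s, in_open_cyl a b T x s -> is_derive (fun y => w1 y s) x (w2 x s))
  (Hdt : forall x s, in_open_cyl a b T x s -> is_derive (fun r => w x r) s (wt x s)).
Hypotheses (Cw : cont_cyl a b T w) (Cw1 : cont_cyl a b T w1) (Cw2 : cont_cyl a b T w2)
  (Cwt : cont_cyl a b T wt).
Hypothesis Hbc : forall s, 0 < s -> Rbar_lt s T -> w1 a s = 0 /\ w1 b s = 0.
Hypotheses (Ht : 0 < t) (HT : Rbar_lt t T).

Lemma diff_quot_unif e : 0 < e -> exists d, 0 < d /\
  forall x h, a < x < b -> h <> 0 -> Rabs h < d -> Rabs ((w x (t + h) - w x t) / h - wt x t) < e.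
Proof.
  intros He.
  destruct (time_nbhd t Ht HT) as [d0 [Hd0 Hnear]].
  destruct (cont_cyl_unif_time wt t Cwt Ht HT e He) as [d1 [Hd1 Hunif]].
  exists (Rmin d0 d1); split; [apply Rmin_pos; auto|]; intros x h Hx Hh0 Hh.
  assert (Hd0_le := Rmin_l d0 d1); assert (Hd1_le := Rmin_r d0 d1).
  assert (Hder : forall r, Rmin t (t + h) <= r <= Rmax t (t + h) ->
    is_derive (fun r => w x r) r (wt x r)).
  { intros r Hr; assert (Hrt := Rabs_sub_between t h r Hr).
    destruct (Hnear r) as [Hr0 HrT]; [lra|]; apply Hdt; repeat split; auto; lra. }
  destruct (MVT_gen (fun r => w x r) t (t + h) (wt x)) as [c [Hc Hmvt]].
  - intros r Hr; apply Hder; lra.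
  - intros r Hr; apply continuity_pt_filterlim,
      (ex_derive_continuous (K := R_AbsRing) (V := R_NormedModule)).
    eexists; apply Hder, Hr.
  - replace ((w x (t + h) - w x t) / h) with (wt x c) by (rewrite Hmvt; field; auto).
    assert (Hct := Rabs_sub_between t h c Hc).
    apply Hunif; lra.
Qed.

Ltac cont_slice := repeat cont_Icc_step; apply cont_cyl_slice; auto.

(* The symmetric form of the increment involves only [w] and [w_xx] at the two
   times, so differentiating it in time needs no mixed derivative [w_xt]. *)
Lemma RInt_sqr_increment s : 0 < s -> Rbar_lt s T ->
  RInt (fun x => w1 x s ^ 2) a b - RInt (fun x => w1 x t ^ 2) a b =
  - RInt (fun x => (w x s - w x t) * (w2 x s + w2 x t)) a b.
Proof.
  intros Hs HsT.
  destruct (Hbc s Hs HsT) as [Has Hbs]; destruct (Hbc t Ht HT) as [Hat Hbt].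
  assert (Hparts : is_RInt (fun x => (w1 x s - w1 x t) * (w1 x s + w1 x t)
                     + (w x s - w x t) * (w2 x s + w2 x t)) a b 0).
  { apply (is_RInt_by_parts_vanish a b (fun x => w x s - w x t)
      (fun x => w1 x s - w1 x t) (fun x => w1 x s + w1 x t) (fun x => w2 x s + w2 x t));
      try cont_slice; auto.
    - intros x Hx; apply (is_derive_minus (fun y => w y s) (fun y => w y t));
        apply Hdw; repeat split; auto; lra.
    - intros x Hx; apply (is_derive_plus (fun y => w1 y s) (fun y => w1 y t));
        apply Hdw1; repeat split; auto; lra.
    - rewrite Has, Hat; ring.
    - rewrite Hbs, Hbt; ring. }
  apply (is_RInt_unique (V := R_CompleteNormedModule)) in Hparts.
  rewrite RInt_Rplus in Hparts by (apply ex_RInt_cont_Icc; [lra | cont_slice]).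
  rewrite <- RInt_Rminus by (apply ex_RInt_cont_Icc; [lra | cont_slice]).
  replace (RInt (fun x => w1 x s ^ 2 - w1 x t ^ 2) a b)
    with (RInt (fun x => (w1 x s - w1 x t) * (w1 x s + w1 x t)) a b)
    by (apply RInt_ext; intros; simpl; ring).
  lra.
Qed.

Lemma RInt_diff_quot_approx e : 0 < e -> exists d, 0 < d /\ forall h, h <> 0 -> Rabs h < d ->
  Rabs (RInt (fun x => (w x (t + h) - w x t) / h * (w2 x (t + h) + w2 x t)) a b
        - 2 * RInt (fun x => wt x t * w2 x t) a b) < e.
Proof.
  intros He.
  destruct (cont_Icc_bounded a b (Rlt_le _ _ Hab) (fun x => wt x t)) as [M1 HM1];
    [cont_slice|].
  destruct (cont_Icc_bounded a b (Rlt_le _ _ Hab) (fun x => 2 * w2 x t)) as [M2 HM2];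
    [cont_slice|].
  set (M := Rmax M1 M2).
  assert (HM : 0 <= M).
  { apply Rle_trans with M1; [|apply Rmax_l].
    apply Rle_trans with (Rabs (wt a t)); [apply Rabs_pos | apply HM1; lra]. }
  set (eta := Rmin 1 (e / (2 * (2 * M + 1) * (b - a)))).
  assert (Heta : 0 < eta).
  { apply Rmin_pos; [lra|]; apply Rdiv_lt_0_compat; [lra|].
    apply Rmult_lt_0_compat; lra. }
  destruct (diff_quot_unif eta Heta) as [d1 [Hd1 Hquot]].
  destruct (cont_cyl_unif_time w2 t Cw2 Ht HT eta Heta) as [d2 [Hd2 Hw2]].
  destruct (time_nbhd t Ht HT) as [d3 [Hd3 Hnear]].
  exists (Rmin d1 (Rmin d2 d3)); split; [repeat apply Rmin_pos; auto|]; intros h Hh0 Hh.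
  assert (Hh1 := Rmin_l d1 (Rmin d2 d3)); assert (Hh2 := Rmin_l d2 d3);
    assert (Hh3 := Rmin_r d2 d3); assert (Hh23 := Rmin_r d1 (Rmin d2 d3)).
  destruct (Hnear (t + h)) as [Hs HsT]; [replace (t + h - t) with h by ring; lra|].
  assert (Hex : ex_RInt (fun x => (w x (t + h) - w x t) / h * (w2 x (t + h) + w2 x t)) a b).
  { apply ex_RInt_ext with (fun x => / h * ((w x (t + h) - w x t) * (w2 x (t + h) + w2 x t))).
    - intros; simpl; field; auto.
    - apply ex_RInt_cont_Icc; [lra | cont_slice]. }
  rewrite <- RInt_Rmult_l, <- RInt_Rminus
    by first [exact Hex | apply ex_RInt_cont_Icc; [lra | cont_slice]].
  apply Rle_lt_trans with ((b - a) * ((2 * M + 1) * eta)).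
  - apply Rabs_RInt_le_const; [lra | |].
    { apply (ex_RInt_minus (V := R_NormedModule)); [exact Hex|].
      apply ex_RInt_cont_Icc; [lra | cont_slice]. }
    intros x Hx; replace (2 * (wt x t * w2 x t)) with (wt x t * (2 * w2 x t)) by ring.
    apply Rabs_mult_sub_le; [| | | | apply Rmin_l].
    + apply Rlt_le, Hquot; auto; lra.
    + replace (w2 x (t + h) + w2 x t - 2 * w2 x t) with (w2 x (t + h) - w2 x t) by ring.
      apply Rlt_le, Hw2; [lra | replace (t + h - t) with h by ring; lra].
    + apply Rle_trans with M1; [apply HM1; lra | apply Rmax_l].
    + apply Rle_trans with M2; [apply HM2; lra | apply Rmax_r].
  - assert (Heta_le : eta <= e / (2 * (2 * M + 1) * (b - a))) by apply Rmin_r.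
    apply Rle_lt_trans with (e / 2); [|lra].
    replace (e / 2) with ((b - a) * ((2 * M + 1) * (e / (2 * (2 * M + 1) * (b - a)))))
      by (field; lra).
    apply Rmult_le_compat_l; [lra|]; apply Rmult_le_compat_l; lra.
Qed.

Lemma is_derive_RInt_sqr :
  is_derive (fun s => RInt (fun x => w1 x s ^ 2) a b) t
    (-2 * RInt (fun x => wt x t * w2 x t) a b).
Proof.
  apply is_derive_Reals; intros e He.
  destruct (RInt_diff_quot_approx e He) as [d1 [Hd1 Happrox]].
  destruct (time_nbhd t Ht HT) as [d2 [Hd2 Hnear]].
  exists (mkposreal _ (Rmin_pos _ _ Hd1 Hd2)); intros h Hh0 Hh; simpl in Hh.
  assert (Hh1 := Rmin_l d1 d2); assert (Hh2 := Rmin_r d1 d2).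
  destruct (Hnear (t + h)) as [Hs HsT]; [replace (t + h - t) with h by ring; lra|].
  cbv beta; rewrite RInt_sqr_increment by auto.
  replace (RInt (fun x => (w x (t + h) - w x t) * (w2 x (t + h) + w2 x t)) a b)
    with (h * RInt (fun x => (w x (t + h) - w x t) / h * (w2 x (t + h) + w2 x t)) a b).
  - replace (- (h * RInt (fun x => (w x (t + h) - w x t) / h * (w2 x (t + h) + w2 x t)) a b) / h
             - -2 * RInt (fun x => wt x t * w2 x t) a b)
      with (- (RInt (fun x => (w x (t + h) - w x t) / h * (w2 x (t + h) + w2 x t)) a b
               - 2 * RInt (fun x => wt x t * w2 x t) a b)) by (field; auto).
    rewrite Rabs_Ropp; apply Happrox; auto; lra.
  - rewrite <- RInt_Rmult_l.
    + apply RInt_ext; intros; simpl; field; auto.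
    + apply ex_RInt_ext with (fun x => / h * ((w x (t + h) - w x t) * (w2 x (t + h) + w2 x t))).
      * intros; simpl; field; auto.
      * apply ex_RInt_cont_Icc; [lra | cont_slice].
Qed.

End TimeDerivative.

End Cylinder.

Definition dmob (eps n w : R) : R :=
  (4 * w ^ 3 * (Rpower w (4 - n) + eps) - w ^ 4 * ((4 - n) * Rpower w (4 - n) / w))
  / (Rpower w (4 - n) + eps) ^ 2.
Definition dtax (eps n w : R) : R :=
  ((5 - n) * Rpower w (5 - n) / w * (Rpower w (4 - n) + eps)
   - Rpower w (5 - n) * ((4 - n) * Rpower w (4 - n) / w))
  / (Rpower w (4 - n) + eps) ^ 2.
Definition react (eps w : R) : R := 3 * w ^ 3 / (3 * w ^ 2 + eps).
Definition dreact (eps w : R) : R := (9 * w ^ 4 + 9 * eps * w ^ 2) / (3 * w ^ 2 + eps) ^ 2.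

Ltac pos_side w :=
  assert (0 < w ^ 2) by (apply pow_lt; lra);
  repeat match goal with
  | |- context [exp ?e] =>
      match goal with
      | _ : 0 < exp e |- _ => fail 1
      | _ => assert (0 < exp e) by apply exp_pos
      end
  end;
  repeat split; try lra; try (intro; lra);
  try (apply Rgt_not_eq; unfold Rgt; repeat apply Rmult_lt_0_compat; lra).

Ltac derive_pos w :=
  unfold Rpower; auto_derive; [pos_side w | cbv beta; field; pos_side w].

Lemma is_derive_mob eps n w : 0 < eps -> 0 < w -> is_derive (mob eps n) w (dmob eps n w).
Proof. intros; unfold mob, dmob; derive_pos w. Qed.

Lemma is_derive_tax eps n w : 0 < eps -> 0 < w -> is_derive (tax eps n) w (dtax eps n w).
Proof. intros; unfold tax, dtax; derive_pos w. Qed.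

Lemma is_derive_react eps w : 0 < eps -> 0 < w -> is_derive (react eps) w (dreact eps w).
Proof. intros; unfold react, dreact; derive_pos w. Qed.

Lemma is_derive_Rpower p w : 0 < w -> is_derive (fun y => Rpower y p) w (p * Rpower w (p - 1)).
Proof. intros; apply is_derive_Reals, derivable_pt_lim_power; auto. Qed.

Ltac cont_pos :=
  let y := fresh "y" in let Hy := fresh "Hy" in
  intros y Hy; apply (ex_derive_continuous (K := R_AbsRing) (V := R_NormedModule));
  unfold mob, dmob, tax, dtax, react, dreact, Rpower; auto_derive; pos_side y.

Ltac cont_Icc_tac :=
  repeat first
    [ cont_Icc_step
    | assumption
    | match goal with
      | |- cont_Icc ?a ?b (fun x => Rpower (@?f x) ?p) =>
          apply (cont_Icc_comp_pos a b ltac:(lra) (fun y => Rpower y p) f);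
          [cont_pos | assumption | assumption]
      | |- cont_Icc ?a ?b (fun x => ?phi (@?f x)) =>
          apply (cont_Icc_comp_pos a b ltac:(lra) phi f);
          [cont_pos | assumption | assumption]
      end ].

(* With [P = w^-a] and [X = w_x^2 / w] the combination below equals
   [P ((w_xx - (1+a)/3 X)^2 + (1+a)(1-2a)/9 X^2)]; hence the restriction a <= 1/2. *)
Lemma rpow_flux_combination_nonneg al W W1 W2 : 0 < al <= 1 / 2 -> 0 < W ->
  0 <= (- al * Rpower W (- al - 1) * W1 * W1 + Rpower W (- al) * W2) * W2
       - (2 - al) / 9 * ((- al - 1) * Rpower W (- al - 1 - 1) * W1 * W1 ^ 3
                         + Rpower W (- al - 1) * (3 * W1 ^ 2 * W2)).
Proof.
  intros Hal HW.
  assert (Hm1 : forall p, Rpower W (p - 1) = Rpower W p / W).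
  { intros p; unfold Rminus; rewrite Rpower_plus, Rpower_Ropp, Rpower_1; auto. }
  rewrite !Hm1.
  assert (HP : 0 < Rpower W (- al)) by apply exp_pos.
  set (P := Rpower W (- al)) in *; set (X := W1 ^ 2 / W).
  replace ((- al * (P / W) * W1 * W1 + P * W2) * W2
           - (2 - al) / 9 * ((- al - 1) * (P / W / W) * W1 * W1 ^ 3 + P / W * (3 * W1 ^ 2 * W2)))
    with (P * ((W2 - (1 + al) / 3 * X) ^ 2 + X ^ 2 * ((1 + al) * (1 - 2 * al) / 9)))
    by (unfold X; field; lra).
  apply Rmult_le_pos; [lra|]; apply Rplus_le_le_0_compat; [apply pow2_ge_0|].
  apply Rmult_le_pos; [apply pow2_ge_0 | apply Rmult_le_pos; [|lra]; nra].
Qed.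

Lemma react_slope_ge eps lam W : 0 < eps -> 0 < lam -> 0 < W ->
  0 <= 3 * lam + (dreact eps W * (W - lam) + react eps W).
Proof.
  intros He Hl HW; unfold dreact, react.
  assert (0 < W ^ 2) by (apply pow_lt; lra).
  assert (0 < W ^ 3) by (apply pow_lt; lra).
  assert (0 < W ^ 4) by (apply pow_lt; lra).
  assert (0 < (3 * W ^ 2 + eps) ^ 2) by (apply pow_lt; lra).
  replace (3 * lam + ((9 * W ^ 4 + 9 * eps * W ^ 2) / (3 * W ^ 2 + eps) ^ 2 * (W - lam)
                      + 3 * W ^ 3 / (3 * W ^ 2 + eps)))
    with ((lam * (18 * W ^ 4 + 9 * eps * W ^ 2 + 3 * eps ^ 2) + (9 * W ^ 4 + 9 * eps * W ^ 2) * W)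
            / (3 * W ^ 2 + eps) ^ 2 + 3 * W ^ 3 / (3 * W ^ 2 + eps))
    by (field; lra).
  apply Rplus_le_le_0_compat; apply Rlt_le, Rdiv_lt_0_compat; nra.
Qed.

Lemma react_young eps D beta W Z Y : 0 < eps -> 0 < D -> 0 < W ->
  0 <= D / 2 * Y ^ 2 + react eps W * beta * Z * Y + beta ^ 2 / (2 * D) * (W ^ 2 * Z ^ 2).
Proof.
  intros He HD HW.
  assert (Hg0 : 0 <= react eps W).
  { unfold react; apply Rlt_le, Rdiv_lt_0_compat; [|nra].
    apply Rmult_lt_0_compat; [lra | apply pow_lt; lra]. }
  assert (HgW : react eps W <= W).
  { unfold react; apply Rle_div_l; [nra|].
    assert (0 < W ^ 3) by (apply pow_lt; lra); nra. }
  set (g := react eps W) in *.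
  replace (D / 2 * Y ^ 2 + g * beta * Z * Y + beta ^ 2 / (2 * D) * (W ^ 2 * Z ^ 2))
    with ((D * Y + g * beta * Z) ^ 2 / (2 * D) + (beta * Z) ^ 2 * (W ^ 2 - g ^ 2) / (2 * D))
    by (field; lra).
  apply Rplus_le_le_0_compat; apply Rmult_le_pos; try (apply Rlt_le, Rinv_0_lt_compat; lra).
  - apply pow2_ge_0.
  - apply Rmult_le_pos; [apply pow2_ge_0 | nra].
Qed.

Section FixedTime.
Variables (a b eps n al D lam sig beta : R) (W W1 W2 W3 W4 Z Z1 Z2 Wt : R -> R).
Hypotheses (Hab : a < b) (Heps : 0 < eps) (Hal : 0 < al <= 1 / 2) (HD : 0 < D) (Hlam : 0 < lam).
Hypotheses (dW : forall x, a < x < b -> is_derive W x (W1 x))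
  (dW1 : forall x, a < x < b -> is_derive W1 x (W2 x))
  (dW2 : forall x, a < x < b -> is_derive W2 x (W3 x))
  (dW3 : forall x, a < x < b -> is_derive W3 x (W4 x))
  (dZ1 : forall x, a < x < b -> is_derive Z1 x (Z2 x)).
Hypotheses (cW : cont_Icc a b W) (cW1 : cont_Icc a b W1) (cW2 : cont_Icc a b W2)
  (cW3 : cont_Icc a b W3) (cW4 : cont_Icc a b W4) (cZ : cont_Icc a b Z)
  (cZ1 : cont_Icc a b Z1) (cZ2 : cont_Icc a b Z2) (cWt : cont_Icc a b Wt).
Hypothesis Wpos : forall x, a <= x <= b -> 0 < W x.
Hypotheses (W1a : W1 a = 0) (W1b : W1 b = 0) (W3a : W3 a = 0) (W3b : W3 b = 0).

Lemma is_RInt_thin_film_by_parts :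
  is_RInt (fun x => (dmob eps n (W x) * W1 x * W3 x + mob eps n (W x) * W4 x) * W2 x
                    + mob eps n (W x) * W3 x * W3 x) a b 0.
Proof.
  apply (is_RInt_by_parts_vanish a b (fun x => mob eps n (W x) * W3 x) _ W2 W3);
    auto; cont_Icc_tac.
  - intros x Hx; assert (0 < W x) by (apply Wpos; lra).
    apply is_derive_comp_mult; auto using is_derive_mob.
  - rewrite W3a; ring.
  - rewrite W3b; ring.
Qed.

Lemma is_RInt_rpow_flux_vanish :
  is_RInt (fun x => (- al - 1) * Rpower (W x) (- al - 1 - 1) * W1 x * W1 x ^ 3
                    + Rpower (W x) (- al - 1) * (3 * W1 x ^ 2 * W2 x)) a b 0.
Proof.
  apply (is_RInt_derive_vanish a b (fun x => Rpower (W x) (- al - 1) * W1 x ^ 3));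
    auto; cont_Icc_tac.
  - intros x Hx; assert (0 < W x) by (apply Wpos; lra).
    apply (is_derive_comp_mult (fun y => Rpower y (- al - 1)) W (fun y => W1 y ^ 3));
      auto using is_derive_Rpower.
    replace (3 * W1 x ^ 2 * W2 x) with (INR 3 * W2 x * W1 x ^ Nat.pred 3) by (simpl; ring).
    apply is_derive_pow; auto.
  - rewrite W1a; ring.
  - rewrite W1b; ring.
Qed.

Lemma is_RInt_react_by_parts :
  is_RInt (fun x => (dreact eps (W x) * W1 x * (W x - lam) + react eps (W x) * W1 x) * W1 x
                    + react eps (W x) * (W x - lam) * W2 x) a b 0.
Proof.
  apply (is_RInt_by_parts_vanish a b (fun x => react eps (W x) * (W x - lam)) _ W1 W2);
    auto; cont_Icc_tac.
  - intros x Hx; assert (0 < W x) by (apply Wpos; lra).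
    apply (is_derive_comp_mult (react eps) W (fun y => W y - lam)); auto using is_derive_react.
    replace (W1 x) with (W1 x - 0) by ring.
    apply (is_derive_minus W (fun _ => lam)); auto using is_derive_const.
  - rewrite W1a; ring.
  - rewrite W1b; ring.
Qed.

Lemma Derive_mob_flux x : a < x < b -> Derive (fun y => mob eps n (W y) * W3 y) x
  = dmob eps n (W x) * W1 x * W3 x + mob eps n (W x) * W4 x.
Proof.
  intros Hx; assert (0 < W x) by (apply Wpos; lra).
  apply is_derive_unique, (is_derive_comp_mult (mob eps n)); auto using is_derive_mob.
Qed.

Lemma Derive_rpow_flux x : a < x < b -> Derive (fun y => Rpower (W y) (- al) * W1 y) x
  = - al * Rpower (W x) (- al - 1) * W1 x * W1 x + Rpower (W x) (- al) * W2 x.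
Proof.
  intros Hx; assert (0 < W x) by (apply Wpos; lra).
  apply is_derive_unique, (is_derive_comp_mult (fun y => Rpower y (- al)));
    auto using is_derive_Rpower.
Qed.

Definition taxis_flux_x x := dtax eps n (W x) * W1 x * Z1 x + tax eps n (W x) * Z2 x.

Lemma Derive_taxis_flux x : a < x < b ->
  Derive (fun y => tax eps n (W y) * Z1 y) x = taxis_flux_x x.
Proof.
  intros Hx; assert (0 < W x) by (apply Wpos; lra).
  apply is_derive_unique, (is_derive_comp_mult (tax eps n)); auto using is_derive_tax.
Qed.

(* Integrand of the energy inequality (with [Wt] not yet eliminated) plus multiples
   of the three vanishing integrands; the equation makes it pointwise nonnegative. *)
Definition energy_defect x :=
  Wt x * W2 x + (- eps) * (mob eps n (W x) * W3 x ^ 2) + (- (D / 2)) * W2 x ^ 2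
  + (- sig) * (taxis_flux_x x * W2 x) + (3 * lam) * W1 x ^ 2
  + (beta ^ 2 / (2 * D)) * (W x ^ 2 * Z x ^ 2)
  + eps * ((dmob eps n (W x) * W1 x * W3 x + mob eps n (W x) * W4 x) * W2 x
           + mob eps n (W x) * W3 x * W3 x)
  + (Rpower eps (al / 2) * (- (2 - al) / 9))
    * ((- al - 1) * Rpower (W x) (- al - 1 - 1) * W1 x * W1 x ^ 3
       + Rpower (W x) (- al - 1) * (3 * W1 x ^ 2 * W2 x))
  + ((dreact eps (W x) * W1 x * (W x - lam) + react eps (W x) * W1 x) * W1 x
     + react eps (W x) * (W x - lam) * W2 x).

Lemma is_RInt_energy_defect : is_RInt energy_defect a b
  (RInt (fun x => Wt x * W2 x) a b + (- eps) * RInt (fun x => mob eps n (W x) * W3 x ^ 2) a b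
   + (- (D / 2)) * RInt (fun x => W2 x ^ 2) a b
   + (- sig) * RInt (fun x => taxis_flux_x x * W2 x) a b
   + (3 * lam) * RInt (fun x => W1 x ^ 2) a b
   + (beta ^ 2 / (2 * D)) * RInt (fun x => W x ^ 2 * Z x ^ 2) a b
   + eps * 0 + (Rpower eps (al / 2) * (- (2 - al) / 9)) * 0 + 0).
Proof.
  unfold energy_defect.
  repeat match goal with
    | |- is_RInt (fun x => _ + _) _ _ (_ + _) => apply is_RInt_Rplus
    end.
  all: try match goal with
    | |- is_RInt (fun x => ?c * _) _ _ (?c * _) => apply is_RInt_Rmult_l
    end.
  1-6: apply is_RInt_cont_Icc; [lra | unfold taxis_flux_x; cont_Icc_tac].
  - apply is_RInt_thin_film_by_parts.
  - apply is_RInt_rpow_flux_vanish.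
  - apply is_RInt_react_by_parts.
Qed.

Hypothesis PDE : forall x, a < x < b ->
  Wt x = - eps * Derive (fun y => mob eps n (W y) * W3 y) x
         + Rpower eps (al / 2) * Derive (fun y => Rpower (W y) (- al) * W1 y) x
         + D * W2 x
         + sig * Derive (fun y => tax eps n (W y) * Z1 y) x
         + 3 * W x ^ 3 / (3 * W x ^ 2 + eps) * (lam - W x + beta * Z x).

Lemma energy_defect_nonneg x : a < x < b -> 0 <= energy_defect x.
Proof.
  intros Hx; assert (HWx : 0 < W x) by (apply Wpos; lra).
  assert (Hep : 0 < Rpower eps (al / 2)) by apply exp_pos.
  unfold energy_defect; rewrite PDE, Derive_mob_flux, Derive_rpow_flux, Derive_taxis_flux by auto.
  apply Rle_trans with
    (Rpower eps (al / 2)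
       * ((- al * Rpower (W x) (- al - 1) * W1 x * W1 x + Rpower (W x) (- al) * W2 x) * W2 x
          - (2 - al) / 9 * ((- al - 1) * Rpower (W x) (- al - 1 - 1) * W1 x * W1 x ^ 3
                            + Rpower (W x) (- al - 1) * (3 * W1 x ^ 2 * W2 x)))
     + (D / 2 * W2 x ^ 2 + react eps (W x) * beta * Z x * W2 x
        + beta ^ 2 / (2 * D) * (W x ^ 2 * Z x ^ 2))
     + (3 * lam + (dreact eps (W x) * (W x - lam) + react eps (W x))) * W1 x ^ 2).
  - apply Rplus_le_le_0_compat; [apply Rplus_le_le_0_compat|].
    + apply Rmult_le_pos; [lra | apply rpow_flux_combination_nonneg; auto].
    + apply react_young; auto.
    + apply Rmult_le_pos; [apply react_slope_ge; auto | apply pow2_ge_0].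
  - apply Req_le; unfold taxis_flux_x, react; field.
    assert (0 < W x ^ 2) by (apply pow_lt; auto); split; lra.
Qed.

Lemma energy_ineq_fixed_time :
  - RInt (fun x => Wt x * W2 x) a b
  + eps * RInt (fun x => mob eps n (W x) * W3 x ^ 2) a b
  + D / 2 * RInt (fun x => W2 x ^ 2) a b
  <= - sig * RInt (fun x => Derive (fun y => tax eps n (W y) * Z1 y) x * W2 x) a b
     + 3 * lam * RInt (fun x => W1 x ^ 2) a b
     + beta ^ 2 / (2 * D) * RInt (fun x => W x ^ 2 * Z x ^ 2) a b.
Proof.
  rewrite (RInt_ext (fun x => Derive (fun y => tax eps n (W y) * Z1 y) x * W2 x)
                    (fun x => taxis_flux_x x * W2 x)).
  - assert (H := is_RInt_ge_0 _ a b _ (Rlt_le _ _ Hab) is_RInt_energy_defect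
                   energy_defect_nonneg).
    lra.
  - intros x Hx; rewrite Rmin_left, Rmax_right in Hx by lra.
    cbv beta; rewrite Derive_taxis_flux; auto.
Qed.

End FixedTime.

Lemma energy_ineq_species a b T D lam sig beta al eps n
  (w w1 w2 w3 w4 wt z z1 z2 z3 z4 zt : R -> R -> R) t :
  a < b -> 0 < D -> 0 < lam -> 0 < al <= 1 / 2 -> 0 < eps ->
  C41 a b T w w1 w2 w3 w4 wt -> C41 a b T z z1 z2 z3 z4 zt ->
  (forall x s, in_cyl a b T x s -> 0 < w x s) ->
  (forall s, 0 < s -> Rbar_lt s T -> w1 a s = 0 /\ w1 b s = 0 /\ w3 a s = 0 /\ w3 b s = 0) ->
  (forall x s, in_open_cyl a b T x s ->
     wt x s =
       - eps * Derive (fun y => mob eps n (w y s) * w3 y s) x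
       + Rpower eps (al / 2) * Derive (fun y => Rpower (w y s) (- al) * w1 y s) x
       + D * w2 x s
       + sig * Derive (fun y => tax eps n (w y s) * z1 y s) x
       + 3 * (w x s) ^ 3 / (3 * (w x s) ^ 2 + eps) * (lam - w x s + beta * z x s)) ->
  0 < t -> Rbar_lt t T ->
  ex_derive (fun s => RInt (fun x => (w1 x s) ^ 2) a b) t /\
  1 / 2 * Derive (fun s => RInt (fun x => (w1 x s) ^ 2) a b) t
  + eps * RInt (fun x => mob eps n (w x t) * (w3 x t) ^ 2) a b
  + D / 2 * RInt (fun x => (w2 x t) ^ 2) a b
  <= - sig * RInt (fun x => Derive (fun y => tax eps n (w y t) * z1 y t) x * w2 x t) a b
     + 3 * lam * RInt (fun x => (w1 x t) ^ 2) a b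
     + beta ^ 2 / (2 * D) * RInt (fun x => (w x t) ^ 2 * (z x t) ^ 2) a b.
Proof.
  intros Hab HD Hlam Hal Heps Cw Cz Wpos Hbc PDE Ht HT.
  destruct Cw as [Hdw [Cw [Cw1 [Cw2 [Cw3 [Cw4 Cwt]]]]]].
  destruct Cz as [Hdz [Cz [Cz1 [Cz2 _]]]].
  assert (TD : is_derive (fun s => RInt (fun x => w1 x s ^ 2) a b) t
                 (-2 * RInt (fun x => wt x t * w2 x t) a b)).
  { apply (is_derive_RInt_sqr a b T Hab w w1 w2 wt t); auto;
      [ intros x s Hxs; destruct (Hdw x s Hxs) as (? & ? & ? & ? & ?); auto .. |].
    intros s Hs HsT; destruct (Hbc s Hs HsT) as (? & ? & _); auto. }
  split; [eexists; exact TD|].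
  replace (Derive (fun s => RInt (fun x => w1 x s ^ 2) a b) t)
    with (-2 * RInt (fun x => wt x t * w2 x t) a b) by (symmetry; apply is_derive_unique, TD).
  destruct (Hbc t Ht HT) as (W1a & W1b & W3a & W3b).
  assert (Hdx : forall x, a < x < b -> in_open_cyl a b T x t) by (intros; repeat split; tauto).
  assert (Cs : forall f, cont_cyl a b T f -> cont_Icc a b (fun x => f x t))
    by (intros; apply (cont_cyl_slice a b T); auto).
  enough (- RInt (fun x => wt x t * w2 x t) a b
          + eps * RInt (fun x => mob eps n (w x t) * w3 x t ^ 2) a b
          + D / 2 * RInt (fun x => w2 x t ^ 2) a b
          <= - sig * RInt (fun x => Derive (fun y => tax eps n (w y t) * z1 y t) x * w2 x t) a b
             + 3 * lam * RInt (fun x => w1 x t ^ 2) a b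
             + beta ^ 2 / (2 * D) * RInt (fun x => w x t ^ 2 * z x t ^ 2) a b) by lra.
  apply (energy_ineq_fixed_time a b eps n al D lam sig beta
    (fun x => w x t) (fun x => w1 x t) (fun x => w2 x t) (fun x => w3 x t) (fun x => w4 x t)
    (fun x => z x t) (fun x => z1 x t) (fun x => z2 x t) (fun x => wt x t));
    auto; try solve [intros x Hx; destruct (Hdw x t (Hdx x Hx)) as (? & ? & ? & ? & ?); auto].
  - intros x Hx; destruct (Hdz x t (Hdx x Hx)) as (? & ? & ? & ? & ?); auto.
  - intros x Hx; apply Wpos; repeat split; tauto.
Qed.

Theorem lemma2p5
  (a b : R) (D1 D2 a1 a2 lam1 lam2 chi1 chi2 alpha n1 n2 eps : R) (T : Rbar)
  (u u1 u2 u3 u4 ut v v1 v2 v3 v4 vt : R -> R -> R) :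
  a < b ->
  0 < D1 -> 0 < D2 -> 0 < a1 -> 0 < a2 -> 0 < lam1 -> 0 < lam2 ->
  0 < chi1 -> 0 < chi2 ->
  0 < alpha <= 1 / 2 ->
  0 < n1 < 4 -> 0 < n2 < 4 ->
  0 < eps < 1 ->
  Rbar_lt 0 T ->
  (* classical regularity C^{4,1}(closure(Omega) x (0,T)) *)
  C41 a b T u u1 u2 u3 u4 ut ->
  C41 a b T v v1 v2 v3 v4 vt ->
  (* positivity *)
  (forall x t, in_cyl a b T x t -> 0 < u x t /\ 0 < v x t) ->
  (* boundary conditions u_x = u_xxx = v_x = v_xxx = 0 on the boundary *)
  (forall t, 0 < t -> Rbar_lt t T ->
     u1 a t = 0 /\ u1 b t = 0 /\ u3 a t = 0 /\ u3 b t = 0 /\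
     v1 a t = 0 /\ v1 b t = 0 /\ v3 a t = 0 /\ v3 b t = 0) ->
  (* the approximating PDE system, pointwise in the interior *)
  (forall x t, in_open_cyl a b T x t ->
     ut x t =
       - eps * Derive (fun y => mob eps n1 (u y t) * u3 y t) x
       + Rpower eps (alpha / 2) * Derive (fun y => Rpower (u y t) (- alpha) * u1 y t) x
       + D1 * u2 x t
       - chi1 * Derive (fun y => tax eps n1 (u y t) * v1 y t) x
       + 3 * (u x t) ^ 3 / (3 * (u x t) ^ 2 + eps) * (lam1 - u x t + a1 * v x t)) ->
  (forall x t, in_open_cyl a b T x t ->
     vt x t =
       - eps * Derive (fun y => mob eps n2 (v y t) * v3 y t) x
       + Rpower eps (alpha / 2) * Derive (fun y => Rpower (v y t) (- alpha) * v1 y t) x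
       + D2 * v2 x t
       + chi2 * Derive (fun y => tax eps n2 (v y t) * u1 y t) x
       + 3 * (v x t) ^ 3 / (3 * (v x t) ^ 2 + eps) * (lam2 - v x t - a2 * u x t)) ->
  forall t, 0 < t -> Rbar_lt t T ->
    (ex_derive (fun s => RInt (fun x => (u1 x s) ^ 2) a b) t /\
     1 / 2 * Derive (fun s => RInt (fun x => (u1 x s) ^ 2) a b) t
     + eps * RInt (fun x => mob eps n1 (u x t) * (u3 x t) ^ 2) a b
     + D1 / 2 * RInt (fun x => (u2 x t) ^ 2) a b
     <= chi1 * RInt (fun x => Derive (fun y => tax eps n1 (u y t) * v1 y t) x * u2 x t) a b
        + 3 * lam1 * RInt (fun x => (u1 x t) ^ 2) a b
        + a1 ^ 2 / (2 * D1) * RInt (fun x => (u x t) ^ 2 * (v x t) ^ 2) a b) /\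
    (ex_derive (fun s => RInt (fun x => (v1 x s) ^ 2) a b) t /\
     1 / 2 * Derive (fun s => RInt (fun x => (v1 x s) ^ 2) a b) t
     + eps * RInt (fun x => mob eps n2 (v x t) * (v3 x t) ^ 2) a b
     + D2 / 2 * RInt (fun x => (v2 x t) ^ 2) a b
     <= - chi2 * RInt (fun x => Derive (fun y => tax eps n2 (v y t) * u1 y t) x * v2 x t) a b
        + 3 * lam2 * RInt (fun x => (v1 x t) ^ 2) a b
        + a2 ^ 2 / (2 * D2) * RInt (fun x => (u x t) ^ 2 * (v x t) ^ 2) a b).
Proof.
  intros Hab HD1 HD2 Ha1 Ha2 Hl1 Hl2 Hc1 Hc2 Hal Hn1 Hn2 Heps HT0 Cu Cv Pos BC PDEu PDEv t Ht HT.
  split.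
  - replace chi1 with (- - chi1) by ring.
    apply (energy_ineq_species a b T D1 lam1 (- chi1) a1 alpha eps n1
      u u1 u2 u3 u4 ut v v1 v2 v3 v4 vt); auto; try lra.
    + intros x s Hxs; apply (Pos x s Hxs).
    + intros s Hs HsT; destruct (BC s Hs HsT) as (? & ? & ? & ? & _); auto.
    + intros x s Hxs; rewrite (PDEu x s Hxs); ring.
  - replace (a2 ^ 2) with ((- a2) ^ 2) by ring.
    rewrite (RInt_ext (fun x => u x t ^ 2 * v x t ^ 2) (fun x => v x t ^ 2 * u x t ^ 2))
      by (intros; simpl; ring).
    apply (energy_ineq_species a b T D2 lam2 chi2 (- a2) alpha eps n2
      v v1 v2 v3 v4 vt u u1 u2 u3 u4 ut); auto; try lra.
    + intros x s Hxs; apply (Pos x s Hxs).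
    + intros s Hs HsT; destruct (BC s Hs HsT) as (_ & _ & _ & _ & ? & ? & ? & ?); auto.
    + intros x s Hxs; rewrite (PDEv x s Hxs); ring.
Qed.
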